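(* Suppose that the integral quadruple $(a,b,c,d)$ with $d>c>b>a\ge2$ satisfies: (1) $a,b,c,d$ are pairwise coprime; (2) $\frac{1}{a}+\frac{1}{b}+\frac{1}{c}+\frac{1}{d}=1+\frac{1}{abcd}$. Then $(a,b,c,d)$ is either $(2,3,7,41)$ or $(2,3,11,13)$. *)

From mathcomp Require Import all_boot all_order all_algebra.

From mathcomp Require Import all_boot all_order all_algebra.
From mathcomp Require Import ring lra zify.
Import Order.TTheory GRing.Theory Num.Theory.

(* Clearing denominators, the equation says bcd + acd + abd + abc = abcd + 1,
   and its left side shows that the reciprocals sum to more than 1.  Since
   1/3 + 1/4 + 1/5 + 1/6 < 1 this forces a = 2; then b, c, d are odd and
   1/2 + 1/5 + 1/7 + 1/9 < 1 forces b = 3.  What remains is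
   (c - 6)(d - 6) = 35, whose solutions with c < d are (7, 41) and (11, 13). *)

Section ReciprocalSums.

Local Open Scope ring_scope.

Lemma ler_invn {R : numFieldType} (m n : nat) :
  (0 < m)%N -> (m <= n)%N -> n%:R^-1 <= m%:R^-1 :> R.
Proof.
move=> m_gt0 le_mn.
by rewrite lef_pV2 ?ler_nat // posrE ltr0n // (leq_trans m_gt0).
Qed.

Lemma invn_sum4_lt1 {R : realFieldType} (a b c d : nat) :
  (3 <= a)%N -> (a < b)%N -> (b < c)%N -> (c < d)%N ->
  a%:R^-1 + b%:R^-1 + c%:R^-1 + d%:R^-1 < 1 :> R.
Proof.
move=> a_ge3 lt_ab lt_bc lt_cd.
have := @ler_invn R 3 a isT a_ge3.
have := @ler_invn R 4 b isT ltac:(lia).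
have := @ler_invn R 5 c isT ltac:(lia).
have := @ler_invn R 6 d isT ltac:(lia).
lra.
Qed.

Lemma odd_ltn_add2 [m n : nat] : odd m -> odd n -> (m < n)%N -> (m.+2 <= n)%N.
Proof.
move=> odd_m odd_n lt_mn; rewrite ltn_neqAle lt_mn andbT.
by apply: contraTneq odd_n => <- /=; rewrite odd_m.
Qed.

Lemma invn_sum4_odd_lt1 {R : realFieldType} (b c d : nat) :
  (5 <= b)%N -> (b < c)%N -> (c < d)%N -> odd b -> odd c -> odd d ->
  2^-1 + b%:R^-1 + c%:R^-1 + d%:R^-1 < 1 :> R.
Proof.
move=> b_ge5 lt_bc lt_cd odd_b odd_c odd_d.
have le_bc := odd_ltn_add2 odd_b odd_c lt_bc.
have le_cd := odd_ltn_add2 odd_c odd_d lt_cd.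
have := @ler_invn R 5 b isT b_ge5.
have := @ler_invn R 7 c isT ltac:(lia).
have := @ler_invn R 9 d isT ltac:(lia).
lra.
Qed.

Lemma invn_sum4_eq_nat {R : numFieldType} (a b c d : nat) :
  (0 < a)%N -> (0 < b)%N -> (0 < c)%N -> (0 < d)%N ->
  a%:R^-1 + b%:R^-1 + c%:R^-1 + d%:R^-1 = 1 + (a * b * c * d)%:R^-1 :> R ->
  (b * c * d + a * c * d + a * b * d + a * b * c = a * b * c * d + 1)%N.
Proof.
rewrite !lt0n -!(pnatr_eq0 R) => a0 b0 c0 d0 eq_inv.
have clear_lhs : (b * c * d + a * c * d + a * b * d + a * b * c)%:R
    = (a * b * c * d)%:R * (a%:R^-1 + b%:R^-1 + c%:R^-1 + d%:R^-1) :> R.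
  by rewrite !natrD !natrM; field; rewrite a0 b0 c0 d0.
have clear_rhs : (a * b * c * d + 1)%:R
    = (a * b * c * d)%:R * (1 + (a * b * c * d)%:R^-1) :> R.
  by rewrite natrD !natrM; field; rewrite a0 b0 c0 d0.
by apply/eqP; rewrite -(eqr_nat R) clear_lhs clear_rhs eq_inv.
Qed.

End ReciprocalSums.

Lemma egyptian_tail_solutions (c d : nat) :
  c < d -> c * d + 1 = 6 * c + 6 * d -> (c, d) = (7, 41) \/ (c, d) = (11, 13).
Proof.
move=> lt_cd eq_cd; have c_le11 : c <= 11 by nia.
case: c c_le11 lt_cd eq_cd => [|[|[|[|[|[|[|[|[|[|[|[|c]]]]]]]]]]]] // _ lt_cd eq_cd;
  first [left; congr pair; lia | right; congr pair; lia | exfalso; lia].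
Qed.

Theorem proposition3p1 (a b c d : nat) :
  (2 <= a)%N -> (a < b)%N -> (b < c)%N -> (c < d)%N ->
  coprime a b -> coprime a c -> coprime a d ->
  coprime b c -> coprime b d -> coprime c d ->
  ((a%:Q)^-1 + (b%:Q)^-1 + (c%:Q)^-1 + (d%:Q)^-1
     = 1 + ((a * b * c * d)%:Q)^-1)%R ->
  (a, b, c, d) = (2, 3, 7, 41) \/ (a, b, c, d) = (2, 3, 11, 13).
Proof.
move=> a_ge2 lt_ab lt_bc lt_cd cop_ab cop_ac cop_ad _ _ _.
(* [n%:Q] is the integer cast [n%:~R]; [pmulrn] turns it into [n%:R]. *)
rewrite -!pmulrn => eq_inv.
have sum_gt1 : (1 < a%:R^-1 + b%:R^-1 + c%:R^-1 + d%:R^-1 :> rat)%R.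
  by rewrite eq_inv ltrDl invr_gt0 ltr0n !muln_gt0; lia.
have a_eq2 : a = 2.
  apply/eqP; rewrite eqn_leq a_ge2 andbT leqNgt; apply/negP => a_ge3.
  by move: sum_gt1; rewrite lt_gtF // invn_sum4_lt1.
subst a; move: cop_ab cop_ac cop_ad; rewrite !coprime2n => odd_b odd_c odd_d.
have b_eq3 : b = 3.
  case: (ltngtP b 4) => [| b_ge5 | b_eq4]; [lia | | by rewrite b_eq4 in odd_b].
  by move: sum_gt1; rewrite lt_gtF // invn_sum4_odd_lt1.
subst b; have /egyptian_tail_solutions : c * d + 1 = 6 * c + 6 * d.
  have := @invn_sum4_eq_nat _ 2 3 c d isT isT ltac:(lia) ltac:(lia) eq_inv.
  lia.
by move=> /(_ lt_cd) [[-> ->] | [-> ->]]; [left | right].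
Qed.
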